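(* Let $m\le k\le n$ be positive integers and $\mathbf a_1,\dots,\mathbf a_n\in\mathbb R^m$, and let $w^*=\max\{[\det(\sum_{i\in S}\mathbf a_i\mathbf a_i^\top)]^{1/m}: S\subseteq[n],|S|=k\}$. Let $(\hat{\mathbf x},\hat w)$ be an optimal solution of the convex relaxation $$\max_{\mathbf x,w}\Big\{w:\ w\le \Big[\det\Big(\sum_{i\in[n]}x_i\mathbf a_i\mathbf a_i^\top\Big)\Big]^{1/m},\ \sum_{i\in[n]}x_i=k,\ \mathbf x\in[0,1]^n\Big\},$$ and let $\mathcal S$ be the random size-$k$ subset of $[n]$ (the output of the sampling algorithm) with $$\Pr[\mathcal S=S]=\frac{\prod_{j\in S}\hat x_j}{\sum_{\bar S\subseteq[n],|\bar S|=k}\prod_{i\in\bar S}\hat x_i}\quad\text{for every } S\subseteq[n],\ |S|=k.$$ Then this algorithm is a $\frac1e$-approximation, i.e. $$\Big\{\mathbb E\Big[\det\Big(\sum_{i\in\mathcal S}\mathbf a_i\mathbf a_i^\top\Big)\Big]\Big\}^{1/m}\ge \frac1e\,w^*.$$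
   Context: $[n]=\{1,\dots,n\}$. This is the $D$-optimal design problem without repetitions: choose $k$ of the $n$ distinct vectors to maximize the $m$-th root of the determinant of the sum of their outer products; $w^*$ is its optimal value. *)

From HB Require Import structures.
From mathcomp Require Import all_boot all_order all_algebra.
From mathcomp Require Import all_classical all_reals all_analysis.
Set Implicit Arguments. Unset Strict Implicit. Unset Printing Implicit Defensive.
Import Order.TTheory GRing.Theory Num.Theory.
Local Open Scope ring_scope.

Section Dopt.
Variables (R : realType) (m n k : nat) (a : 'I_n -> 'cV[R]_m).

Definition mroot (t : R) : R := t `^ (m%:R^-1).

Definition detS (S : {set 'I_n}) : R :=
  \det (\sum_(i in S) (a i *m (a i)^T)).

Definition detx (x : 'I_n -> R) : R :=
  \det (\sum_(i < n) x i *: (a i *m (a i)^T)).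

(* w^* = max over size-k subsets of det(...)^{1/m} (all values are >= 0) *)
Definition wstar : R :=
  \big[Num.max/0]_(S : {set 'I_n} | #|S| == k) mroot (detS S).

Definition relax_feasible (x : 'I_n -> R) (w : R) : Prop :=
  [/\ w <= mroot (detx x), \sum_(i < n) x i = k%:R
    & forall i, 0 <= x i <= 1].

Definition relax_optimal (x : 'I_n -> R) (w : R) : Prop :=
  relax_feasible x w /\ forall x' w', relax_feasible x' w' -> w' <= w.

Definition sample_prob (x : 'I_n -> R) (S : {set 'I_n}) : R :=
  (\prod_(j in S) x j) /
  (\sum_(T : {set 'I_n} | #|T| == k) \prod_(i in T) x i).

Definition expected_det (x : 'I_n -> R) : R :=
  \sum_(S : {set 'I_n} | #|S| == k) sample_prob x S * detS S.

End Dopt.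

(* By the Cauchy-Binet formula, det (sum_i c_i a_i a_i^T) is the sum over
   m-sets T of c^T det(A_T), where c^T = prod_{i in T} c_i and
   det(A_T) = det (sum_{i in T} a_i a_i^T) >= 0.  Applied to the indicator of
   each k-set S and averaged with weights x^S, this gives
   sum_{|S|=k} x^S det(A_S) = sum_{|T|=m} det(A_T) x^T e_{k-m}(x on ~T),
   e_l being the elementary symmetric sum of degree l.  Hence the theorem
   reduces to e_k(x) <= e^m e_{k-m}(x on ~T) whenever |T| = m, sum_i x_i = k
   and 0 <= x <= 1.  Split e_k(x) = sum_j e_j(x on T) e_{k-j}(x on ~T) and put
   t = sum_{i in T} x_i, so that the mass of ~T is (k - m) + (m - t).  Since
   (l + 1) e_{l+1} <= (sum of the x_i) e_l, we get e_j(x on T) <= t^j / j! and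
   e_{k-j}(x on ~T) <= ((k-m) + (m-t))^(m-j) e_{k-m}(x on ~T) / ((k-m+1)...(k-j)),
   and (d + u)^p <= e^u (d+1)...(d+p) bounds the last fraction by e^(m-t);
   summing over j leaves e^t e^(m-t).  Indicators of k-sets are feasible for
   the relaxation, so w^* is at most its value, and m-th roots turn e^(-m)
   into 1/e. *)
From HB Require Import structures.
From mathcomp Require Import all_boot all_order all_algebra.
From mathcomp Require Import all_classical all_reals all_analysis.
From mathcomp Require Import ring perm.
Set Implicit Arguments.
Unset Strict Implicit.
Unset Printing Implicit Defensive.
Import Order.TTheory GRing.Theory Num.Theory.
Local Open Scope ring_scope.

Section ExpBounds.
Variable R : realType.

Definition rising (d : R) (p : nat) : R := \prod_(i < p) (d + i.+1%:R).

Lemma risingS (d : R) p : rising d p.+1 = rising d p * (d + p.+1%:R).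
Proof. by rewrite /rising big_ord_recr. Qed.

Lemma rising_gt0 (d : R) p : 0 <= d -> 0 < rising d p.
Proof. by move=> d0; apply: prodr_gt0 => i _; apply: ltr_wpDl. Qed.

Lemma rising0 p : rising 0 p = p`!%:R.
Proof.
rewrite /rising fact_prod big_add1 /= big_mkord natr_prod.
by apply: eq_bigr => i _; rewrite add0r.
Qed.

Lemma sum_exp_coeff_le_expR (t : R) N : 0 <= t ->
  \sum_(j < N) t ^+ j / j`!%:R <= expR t.
Proof.
move=> t0; rewrite -(big_mkord xpredT (fun j => t ^+ j / j`!%:R)).
apply: (nondecreasing_cvgn_le _ (is_cvg_series_exp_coeff t)).
by apply: nondecreasing_series => j _ _; exact: exp_coeff_ge0.
Qed.

Lemma pow_div_fact_le_expR (u : R) p : 0 <= u -> u ^+ p / p`!%:R <= expR u.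
Proof.
move=> u0; apply: le_trans (sum_exp_coeff_le_expR p.+1 u0).
by rewrite big_ord_recr lerDr sumr_ge0 // => j _; rewrite divr_ge0 ?exprn_ge0.
Qed.

Lemma pow_fact_le_rising (d u : R) p : 0 <= d -> p%:R <= u ->
  (d + u) ^+ p * p`!%:R <= u ^+ p * rising d p.
Proof.
move=> d0; elim: p => [|p IHp] hp; first by rewrite fact0 !expr0 /rising big_ord0.
have u0 : 0 <= u := le_trans (ler0n _ _) hp.
have hp' : p%:R <= u by apply: le_trans hp; rewrite ler_nat.
have step : (d + u) * p.+1%:R <= u * (d + p.+1%:R).
  by rewrite mulrDl mulrDr [u * d]mulrC [u * _]mulrC lerD2r ler_wpM2l.
rewrite risingS factS natrM !exprS.
have -> : (d + u) * (d + u) ^+ p * (p.+1%:R * p`!%:R)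
  = ((d + u) ^+ p * p`!%:R) * ((d + u) * p.+1%:R) by ring.
have -> : u * u ^+ p * (rising d p * (d + p.+1%:R))
  = (u ^+ p * rising d p) * (u * (d + p.+1%:R)) by ring.
by apply: ler_pM; rewrite ?IHp ?mulr_ge0 ?exprn_ge0 ?addr_ge0.
Qed.

Lemma pow_le_expR_rising (d u : R) p : 0 <= d -> 0 <= u ->
  (d + u) ^+ p <= expR u * rising d p.
Proof.
move=> d0 u0; elim: p => [|p IHp].
  by rewrite expr0 /rising big_ord0 mulr1 (le_trans _ (expR_ge1Dx u)) ?lerDl.
have [hp|hp] := leP p.+1%:R u.
  have fact_gt0R : 0 < p.+1`!%:R :> R by rewrite ltr0n fact_gt0.
  rewrite -(ler_pM2r fact_gt0R) mulrAC.
  apply: le_trans (pow_fact_le_rising d0 hp) _.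
  apply: ler_wpM2r; first exact/ltW/rising_gt0.
  by rewrite -ler_pdivrMr // pow_div_fact_le_expR.
rewrite risingS exprSr mulrA; apply: ler_pM => //.
- by rewrite exprn_ge0 ?addr_ge0.
- by rewrite addr_ge0.
- by rewrite lerD2l ltW.
Qed.

End ExpBounds.

Section ElementarySymmetric.
Variables (R : realType) (n : nat) (x : 'I_n -> R).
Hypothesis x01 : forall i, 0 <= x i <= 1.
Implicit Types (V S L T A B : {set 'I_n}).

Definition esym V (l : nat) : R :=
  \sum_(S : {set 'I_n} | (S \subset V) && (#|S| == l)) \prod_(i in S) x i.

Definition sumx V : R := \sum_(i in V) x i.

Lemma x_ge0 i : 0 <= x i. Proof. by case/andP: (x01 i). Qed.

Lemma prodx_ge0 S : 0 <= \prod_(i in S) x i.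
Proof. by apply: prodr_ge0 => i _; exact: x_ge0. Qed.

Lemma esym_ge0 V l : 0 <= esym V l.
Proof. by apply: sumr_ge0 => S _; exact: prodx_ge0. Qed.

Lemma sumx_ge0 V : 0 <= sumx V.
Proof. by apply: sumr_ge0 => i _; exact: x_ge0. Qed.

Lemma sumx_le_card V : sumx V <= #|V|%:R.
Proof.
rewrite -sumr_const; apply: ler_sum => i _; by case/andP: (x01 i).
Qed.

Lemma esym0 V : esym V 0 = 1.
Proof.
rewrite /esym (big_pred1 finset.set0) ?big_set0 // => S /=.
by rewrite cards_eq0 andbC; case: eqP => [->|]; rewrite ?finset.sub0set.
Qed.

Lemma sum_prod_setU1 V l :
  \sum_(L : {set 'I_n} | (L \subset V) && (#|L| == l))
     \sum_(i in V :\: L) \prod_(j in i |: L) x j = l.+1%:R * esym V l.+1.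
Proof.
have add_point i : i \in V ->
    \sum_(L : {set 'I_n} | (L \subset V) && (#|L| == l) && (i \in V :\: L))
       \prod_(j in i |: L) x j =
    \sum_(S : {set 'I_n} | (S \subset V) && (#|S| == l.+1) && (i \in S))
       \prod_(j in S) x j.
  move=> iV; symmetry.
  rewrite (reindex_onto (fun L => i |: L) (fun S => S :\ i)) /=; last first.
    by move=> S /andP[_ iS]; exact: finset.setD1K.
  apply: eq_bigl => L; case iL: (i \in L).
    have -> : ((i |: L) :\ i == L) = false.
      by apply/negbTE/negP => /eqP E; move: iL; rewrite -E !inE eqxx.
    by rewrite finset.in_setD iL /= !andbF.
  rewrite (finset.setU1K (negbT iL)) eqxx andbT cardsU1 iL.
  rewrite finset.subUset finset.sub1set iV /=.
  by rewrite finset.in_setD iL iV finset.setU11 andbT.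
rewrite (exchange_big_dep (mem V)) /=; last by move=> L i _; rewrite inE => /andP[].
rewrite (eq_bigr _ add_point).
rewrite (exchange_big_dep (fun S => (S \subset V) && (#|S| == l.+1))) /=; last first.
  by move=> i S _ /andP[].
rewrite /esym mulr_sumr; apply: eq_bigr => S /andP[SV /eqP cS].
transitivity (\sum_(i in S) \prod_(j in S) x j); last by rewrite sumr_const cS mulr_natl.
apply: eq_bigl => i; rewrite SV cS eqxx /=.
by apply/idP/idP => [/andP[]//| iS]; rewrite iS (fintype.subsetP SV).
Qed.

Lemma sumx_mul_esym V l :
  sumx V * esym V l = l.+1%:R * esym V l.+1 +
  \sum_(L : {set 'I_n} | (L \subset V) && (#|L| == l)) (\prod_(i in L) x i) * sumx L.
Proof.
rewrite -sum_prod_setU1 /esym mulr_sumr -big_split /=.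
apply: eq_bigr => L /andP[LV _].
rewrite mulrC /sumx mulr_sumr (big_setID L) /= (finset.setIidPr LV) addrC; congr (_ + _).
  apply: eq_bigr => i; rewrite !inE => /andP[iL _].
  by rewrite big_setU1 /= ?iL // mulrC.
by rewrite mulr_sumr; apply: eq_bigr => i _; rewrite mulrC.
Qed.

Lemma esymS_le V l : l.+1%:R * esym V l.+1 <= sumx V * esym V l.
Proof.
rewrite sumx_mul_esym lerDl; apply: sumr_ge0 => L _.
by rewrite mulr_ge0 ?prodx_ge0 ?sumx_ge0.
Qed.

Lemma esymS_ge V l : (sumx V - l%:R) * esym V l <= l.+1%:R * esym V l.+1.
Proof.
rewrite mulrBl sumx_mul_esym lerBlDr lerD2l /esym mulr_sumr.
apply: ler_sum => L /andP[_ /eqP cL].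
by rewrite [l%:R * _]mulrC; apply: ler_wpM2l; rewrite ?prodx_ge0 // -cL sumx_le_card.
Qed.

Lemma esym_gt0 V l : l%:R <= sumx V -> 0 < esym V l.
Proof.
elim: l => [|l IHl] hl; first by rewrite esym0.
have hl' : l%:R <= sumx V by apply: le_trans hl; rewrite ler_nat.
have gap : 0 < sumx V - l%:R.
  by rewrite subr_gt0; apply: lt_le_trans hl; rewrite ltr_nat.
have : 0 < l.+1%:R * esym V l.+1.
  by apply: lt_le_trans (esymS_ge V l); rewrite mulr_gt0 ?IHl.
by rewrite pmulr_rgt0 ?ltr0n.
Qed.

Lemma esym_rising_le V d p :
  esym V (d + p) * rising d%:R p <= sumx V ^+ p * esym V d.
Proof.
elim: p => [|p IHp]; first by rewrite addn0 /rising big_ord0 mulr1 expr0 mul1r.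
rewrite risingS -natrD addnS exprS -mulrA.
have -> : esym V (d + p).+1 * (rising d%:R p * (d + p).+1%:R) =
  (d + p).+1%:R * esym V (d + p).+1 * rising d%:R p by ring.
apply: le_trans (_ : sumx V * esym V (d + p) * rising d%:R p <= _).
  by apply: ler_wpM2r; [exact/ltW/rising_gt0 | exact: esymS_le].
by rewrite -mulrA; apply: ler_wpM2l; [exact: sumx_ge0 | exact: IHp].
Qed.

Lemma esym_fact_le V j : esym V j * j`!%:R <= sumx V ^+ j.
Proof. by have := esym_rising_le V 0 j; rewrite esym0 mulr1 rising0. Qed.

Lemma sum_prod_setI_eq T A l : A \subset T -> (#|A| <= l)%N ->
  \sum_(S : {set 'I_n} | (#|S| == l) && (S :&: T == A)) \prod_(i in S) x i =
  (\prod_(i in A) x i) * esym (~: T) (l - #|A|).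
Proof.
move=> AT Al; rewrite /esym mulr_sumr.
rewrite (reindex_onto (fun B => A :|: B) (fun S => S :\: T)) /=; last first.
  by move=> S /andP[_ /eqP <-]; rewrite finset.setID.
have disjAB B : B \subset ~: T -> [disjoint A & B].
  move=> BT; rewrite finset.disjoints_subset (fintype.subset_trans AT) //.
  by rewrite finset.subsetC.
symmetry; apply: eq_big => B; last first.
  move=> /andP[/disjAB AB0 _]; rewrite -bigU //=.
  by apply: eq_bigl => i; rewrite !inE.
case BT: (B \subset ~: T); last first.
  have [i iB iT] := fintype.subsetPn (negbT BT).
  suff -> : ((A :|: B) :\: T == B) = false by rewrite andbF.
  apply/negbTE/negP => /eqP E; move: iB iT; rewrite -E !inE.
  by case: (i \in T).
have BT0 : [disjoint B & T] by rewrite finset.disjoints_subset.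
rewrite finset.setIUl (finset.setIidPl AT) (finset.disjoint_setI0 BT0).
rewrite finset.setU0 eqxx andbT.
rewrite finset.setDUl (finset.setDidPl BT0).
have -> : A :\: T = finset.set0 by apply/eqP; rewrite finset.setD_eq0.
rewrite finset.set0U eqxx andbT /= finset.cardsU.
rewrite (finset.disjoint_setI0 (disjAB B BT)) finset.cards0 subn0.
by apply/eqP/eqP => [->|<-]; rewrite ?subnKC ?addKn.
Qed.

Lemma esym_setT_split T l : (#|T| <= l)%N ->
  esym [set: 'I_n] l = \sum_(j < #|T|.+1) esym T j * esym (~: T) (l - j).
Proof.
move=> Tl; rewrite {1}/esym.
under eq_bigl => S do rewrite finset.subsetT.
rewrite (partition_big (fun S => S :&: T) (fun A => A \subset T)) /=; last first.
  by move=> S _; exact: finset.subsetIr.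
under eq_bigr => A AT.
  rewrite sum_prod_setI_eq //; last exact: leq_trans (fintype.subset_leq_card AT) Tl.
  over.
rewrite (partition_big (fun A : {set 'I_n} => inord #|A| : 'I_#|T|.+1) xpredT) //=.
apply: eq_bigr => j _; rewrite /esym mulr_suml; apply: eq_big => A.
  case AT: (A \subset T) => //=.
  have cardA : (#|A| < #|T|.+1)%N by rewrite ltnS fintype.subset_leq_card.
  by apply/eqP/eqP => [<-|->]; rewrite ?inordK // inord_val.
move=> /andP[AT /eqP <-].
by rewrite inordK // ltnS fintype.subset_leq_card.
Qed.

Lemma esym_le_expR_esym_setC T k : (#|T| <= k)%N -> sumx [set: 'I_n] = k%:R ->
  esym [set: 'I_n] k <= expR #|T|%:R * esym (~: T) (k - #|T|).
Proof.
move=> Tk sumk; set m := #|T|; set t := sumx T; set U := ~: T.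
have sumU : sumx U = (k - m)%:R + (m%:R - t).
  have splitT : sumx [set: 'I_n] = t + sumx U.
    by rewrite /sumx (big_setID T) finset.setTI finset.setTD.
  have -> : sumx U = k%:R - t by rewrite -sumk splitT addrC addKr.
  by rewrite natrB //; ring.
have t0 : 0 <= t := sumx_ge0 T.
have mt0 : 0 <= m%:R - t by rewrite subr_ge0 sumx_le_card.
set C := expR (m%:R - t) * esym U (k - m).
rewrite (esym_setT_split Tk).
apply: le_trans (_ : \sum_(j < m.+1) t ^+ j / j`!%:R * C <= _); last first.
  rewrite -mulr_suml /C mulrA; apply: ler_wpM2r; first exact: esym_ge0.
  have -> : expR m%:R = expR t * expR (m%:R - t) by rewrite -expRD addrC subrK.
  by apply: ler_wpM2r; [exact: expR_ge0 | exact: sum_exp_coeff_le_expR].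
apply: ler_sum => j _.
apply: ler_pM; [exact: esym_ge0 | exact: esym_ge0 | |].
  by rewrite ler_pdivlMr ?ltr0n ?fact_gt0 // esym_fact_le.
have jm : (j <= m)%N by rewrite -ltnS ltn_ord.
have -> : (k - j = (k - m) + (m - j))%N by rewrite addnBA // subnK.
rewrite -(ler_pM2r (rising_gt0 (m - j) (ler0n R (k - m)))).
apply: le_trans (esym_rising_le U (k - m) (m - j)) _.
rewrite /C mulrAC; apply: ler_wpM2r; first exact: esym_ge0.
by rewrite sumU; exact: pow_le_expR_rising.
Qed.

End ElementarySymmetric.

Definition indicator {R : pzSemiRingType} {n : nat} (T : {set 'I_n}) : 'I_n -> R :=
  fun i => (i \in T)%:R.

Section CauchyBinet.
Variables (R : realType) (m n : nat) (a : 'I_n -> 'cV[R]_m).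
Implicit Types (c : 'I_n -> R) (S T : {set 'I_n}) (f : {ffun 'I_m -> 'I_n}).

(* Indexed by ['I_p] with [p = m] so that it applies to sums over ['I_#|T|]. *)
Lemma det_sum_outer_ge0 p (h : 'I_p -> 'cV[R]_m) : p = m ->
  0 <= \det (\sum_(j < p) h j *m (h j)^T).
Proof.
move=> pm; subst p; pose N : 'M[R]_m := \matrix_(j, r) h j r 0.
have -> : \sum_(j < m) h j *m (h j)^T = N^T *m N.
  apply/matrixP => r s; rewrite summxE !mxE; apply: eq_bigr => j _.
  by rewrite !mxE big_ord1 !mxE.
by rewrite det_mulmx det_tr -expr2 sqr_ge0.
Qed.

Lemma detS_ge0 T : #|T| = m -> 0 <= detS a T.
Proof.
by move=> cardT; rewrite /detS (big_enum_val (fun i => a i *m (a i)^T)) det_sum_outer_ge0.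
Qed.

Definition cb_coef f : R :=
  (\prod_(r < m) a (f r) r 0) * \det (\matrix_(r, s) a (f r) s 0).

Lemma cb_coef_eq0 f : ~~ injectiveb f -> cb_coef f = 0.
Proof.
move=> /injectivePn[r1 [r2 ne12 e12]].
by rewrite /cb_coef (determinant_alternate ne12) ?mulr0 // => s; rewrite !mxE e12.
Qed.

Lemma detx_expand c :
  detx a c = \sum_(f : {ffun 'I_m -> 'I_n}) (\prod_(r < m) c (f r)) * cb_coef f.
Proof.
rewrite /detx {1}/determinant.
transitivity (\sum_(s : 'S_m) (-1) ^+ s * \sum_(f : {ffun 'I_m -> 'I_n})
    \prod_(r < m) (c (f r) * (a (f r) r 0 * a (f r) (s r) 0))).
  apply: eq_bigr => s _; congr (_ * _).
  rewrite (eq_bigr (fun r => \sum_(i < n) c i * (a i r 0 * a i (s r) 0))).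
    exact: bigA_distr_bigA.
  move=> r _; rewrite summxE; apply: eq_bigr => i _.
  by rewrite !mxE big_ord1 !mxE.
under eq_bigr => s _ do rewrite mulr_sumr.
rewrite exchange_big /=; apply: eq_bigr => f _.
rewrite /cb_coef /determinant !mulr_sumr; apply: eq_bigr => s _.
rewrite !big_split /=.
have -> : \prod_(r < m) (\matrix_(r', j) a (f r') j 0) r (s r) =
  \prod_(r < m) a (f r) (s r) 0 by apply: eq_bigr => r _; rewrite mxE.
by rewrite [LHS]mulrCA [X in _ * X = _]mulrCA.
Qed.

Definition cb_weight T : R :=
  \sum_(f : {ffun 'I_m -> 'I_n} | f @: [set: 'I_m] == T) cb_coef f.

Lemma detx_cb_weight c :
  detx a c = \sum_(T : {set 'I_n}) (\prod_(i in T) c i) * cb_weight T.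
Proof.
rewrite detx_expand (partition_big (fun f => f @: [set: 'I_m]) xpredT) //.
apply: eq_bigr => T _; rewrite /cb_weight mulr_sumr; apply: eq_bigr => f /eqP <-.
have [/injectiveP f_inj|f_ninj] := boolP (injectiveb f); last first.
  by rewrite cb_coef_eq0 ?mulr0.
rewrite big_imset /=; last by move=> r1 r2 _ _; exact: f_inj.
by congr (_ * _); apply: eq_bigl => r; rewrite inE.
Qed.

Lemma cb_weight_eq0 T : #|T| != m -> cb_weight T = 0.
Proof.
move=> cardT; apply: big1 => f /eqP imfT; apply: cb_coef_eq0.
apply/negP => /injectiveP f_inj; move: cardT.
by rewrite -imfT card_imset // finset.cardsT card_ord eqxx.
Qed.

Lemma prod_indicator T T' : \prod_(i in T') (indicator T i : R) = (T' \subset T)%:R.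
Proof.
have [sub|/fintype.subsetPn[i iT' iNT]] := boolP (T' \subset T).
  by apply: big1 => i iT'; rewrite /indicator (fintype.subsetP sub i iT').
by rewrite (bigD1 i) //= /indicator (negbTE iNT) mul0r.
Qed.

Lemma detS_indicator T : detS a T = detx a (indicator T).
Proof.
rewrite /detS /detx; congr (\det _); rewrite big_mkcond; apply: eq_bigr => i _.
by rewrite /indicator; case: (i \in T); rewrite ?scale1r ?scale0r.
Qed.

(* Evaluate [detx_cb_weight] at the indicator of [T]: only the subsets of [T]
   survive, and among them only [T] itself has [m] elements. *)
Lemma cb_weight_detS T : #|T| = m -> cb_weight T = detS a T.
Proof.
move=> cardT; rewrite detS_indicator detx_cb_weight (bigD1 T) //= prod_indicator.
rewrite fintype.subxx mul1r big1 ?addr0 // => T' neT'T; rewrite prod_indicator.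
have [sub|] := boolP (T' \subset T); last by rewrite mul0r.
rewrite cb_weight_eq0 ?mulr0 // -cardT ltn_eqF // fintype.proper_card //.
by rewrite finset.properEneq neT'T sub.
Qed.

Lemma cauchy_binet c :
  detx a c = \sum_(T : {set 'I_n} | #|T| == m) (\prod_(i in T) c i) * detS a T.
Proof.
rewrite detx_cb_weight [RHS]big_mkcond /=; apply: eq_bigr => T _.
have [/eqP cardT|cardT] := boolP (#|T| == m); first by rewrite cb_weight_detS.
by rewrite cb_weight_eq0 ?mulr0.
Qed.

Lemma detx_ge0 c : (forall i, 0 <= c i) -> 0 <= detx a c.
Proof.
move=> c_ge0; rewrite cauchy_binet; apply: sumr_ge0 => T /eqP cardT.
by rewrite mulr_ge0 ?detS_ge0 // prodr_ge0.
Qed.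

End CauchyBinet.

Section Sampling.
Variables (R : realType) (m n k : nat) (a : 'I_n -> 'cV[R]_m) (x : 'I_n -> R).
Hypotheses (hmk : (m <= k)%N) (x01 : forall i, 0 <= x i <= 1).
Hypothesis sum_x : \sum_(i < n) x i = k%:R.

Lemma sumx_setT : sumx x [set: 'I_n] = k%:R.
Proof. by rewrite -sum_x /sumx; apply: eq_bigl => i; rewrite inE. Qed.

Lemma sum_prod_card_eq_esym :
  \sum_(S : {set 'I_n} | #|S| == k) \prod_(i in S) x i = esym x [set: 'I_n] k.
Proof. by apply: eq_bigl => S; rewrite finset.subsetT. Qed.

Lemma sum_prod_detS_ge :
  expR (- m%:R) * esym x [set: 'I_n] k * detx a x <=
  \sum_(S : {set 'I_n} | #|S| == k) (\prod_(i in S) x i) * detS a S.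
Proof.
under eq_bigr => S _ do rewrite detS_indicator cauchy_binet mulr_sumr.
rewrite exchange_big /= cauchy_binet mulr_sumr; apply: ler_sum => T /eqP cardT.
have -> : \sum_(S : {set 'I_n} | #|S| == k)
    (\prod_(i in S) x i) * ((\prod_(i in T) indicator S i) * detS a T) =
  detS a T * \sum_(S : {set 'I_n} | (#|S| == k) && (S :&: T == T)) \prod_(i in S) x i.
  rewrite mulr_sumr big_mkcondr /=; apply: eq_bigr => S _.
  rewrite prod_indicator (sameP eqP finset.setIidPr).
  by case: (T \subset S); rewrite ?mul1r ?mul0r ?mulr0 // mulrC.
rewrite sum_prod_setI_eq ?cardT // mulrC [X in _ <= X]mulrA [detS a T * _]mulrC.
apply: ler_wpM2l; first by rewrite mulr_ge0 ?detS_ge0 ?prodx_ge0.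
rewrite expRN mulrC ler_pdivrMr ?expR_gt0 // mulrC -cardT.
by apply: esym_le_expR_esym_setC; rewrite ?cardT ?sumx_setT.
Qed.

Lemma expected_det_ge : expR (- m%:R) * detx a x <= expected_det k a x.
Proof.
have Z_gt0 : 0 < esym x [set: 'I_n] k by apply: esym_gt0; rewrite ?sumx_setT.
rewrite /expected_det /sample_prob sum_prod_card_eq_esym.
under eq_bigr => S _ do rewrite mulrAC.
rewrite -mulr_suml ler_pdivlMr // mulrAC.
exact: sum_prod_detS_ge.
Qed.

End Sampling.

Lemma mroot_expRN_mul (R : realType) m (t : R) : (0 < m)%N -> 0 <= t ->
  mroot m (expR (- m%:R) * t) = (expR 1)^-1 * mroot m t.
Proof.
move=> m_gt0 t0; rewrite /mroot powRM ?expR_ge0 //; congr (_ * _).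
by rewrite /powR expR_eq0 expRK mulrN mulVf ?pnatr_eq0 -?lt0n // expRN.
Qed.

Lemma wstar_le_relax_optimal (R : realType) m k n (a : 'I_n -> 'cV[R]_m) x w :
  relax_optimal k a x w -> wstar k a <= w.
Proof.
move=> [x_feas w_max]; apply: bigmax_le => [|T /eqP cardT].
  by apply: (w_max x); case: x_feas => _ ? ?; split; rewrite ?powR_ge0.
apply: (w_max (indicator T)); split; first by rewrite detS_indicator.
- rewrite -cardT -sumr_const [RHS]big_mkcond; apply: eq_bigr => i _.
  by rewrite /indicator; case: (i \in T).
- by move=> i; rewrite /indicator; case: (i \in T); rewrite ?ler01 ?lexx.
Qed.

Theorem theorem1 (R : realType) (m k n : nat)
    (hm : (0 < m)%N) (hmk : (m <= k)%N) (hkn : (k <= n)%N)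
    (a : 'I_n -> 'cV[R]_m) (xh : 'I_n -> R) (wh : R)
    (hopt : relax_optimal k a xh wh) :
  (expR 1)^-1 * wstar k a <= mroot m (expected_det k a xh).
Proof.
have [[wh_le sum_xh xh01] _] := hopt.
have detx_xh_ge0 : 0 <= detx a xh by apply: detx_ge0 => i; case/andP: (xh01 i).
have expR_detx_ge0 : 0 <= expR (- m%:R) * detx a xh by rewrite mulr_ge0 ?expR_ge0.
have E_ge := expected_det_ge a hmk xh01 sum_xh.
apply: le_trans (_ : (expR 1)^-1 * mroot m (detx a xh) <= _).
  rewrite ler_wpM2l ?invr_ge0 ?expR_ge0 //.
  exact: le_trans (wstar_le_relax_optimal hopt) wh_le.
rewrite -mroot_expRN_mul //; apply: ge0_ler_powR; rewrite ?nnegrE ?invr_ge0 //.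
exact: le_trans expR_detx_ge0 E_ge.
Qed.
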